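(* Let $(\mathcal{X},d)$ be a finite metric space, $P$ a probability distribution on $\mathcal{X}$, and $k\ge 1$ an integer. Let $O\in\mathcal{X}_k$ be an optimal solution of the $k$-RP instance, i.e., $O$ minimizes $\mathbb{E}_{X\sim P_k}[d_k(O,X)]$ over $\mathcal{X}_k$. If $S$ is a random $k$-multiset obtained by drawing $k$ points of $\mathcal{X}$ i.i.d. according to $P$ (i.e., $S\sim P_k$), then $$\mathbb{E}_{S\sim P_k}\mathbb{E}_{X\sim P_k}[d_k(S,X)]\le 2\cdot \mathbb{E}_{X\sim P_k}[d_k(O,X)].$$
   Context: $\mathcal{X}_k$ denotes the set of all multisets of exactly $k$ points of $\mathcal{X}$. For $U,V\in\mathcal{X}_k$, $d_k(U,V)$ is the minimum, over all perfect matchings between the $k$ elements of $U$ and the $k$ elements of $V$ (counted with multiplicity), of the sum of $d(u,v)$ over matched pairs $(u,v)$. $P_k$ is the distribution on $\mathcal{X}_k$ of the multiset of $k$ points drawn i.i.d. from $P$. The $k$-RP (robotaxi placement) problem asks for $S\in\mathcal{X}_k$ minimizing its cost $\mathbb{E}_{X\sim P_k}[d_k(S,X)]$. *)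

From HB Require Import structures.
From mathcomp Require Import all_boot all_order all_algebra all_fingroup.
Set Implicit Arguments. Unset Strict Implicit. Unset Printing Implicit Defensive.
Import Order.TTheory GRing.Theory Num.Theory.
Local Open Scope ring_scope.

(* A k-multiset of points of X is represented by a k-tuple (ordered list)
   t : {ffun 'I_k -> X}; two tuples represent the same multiset iff they
   differ by a permutation of 'I_k.  All quantities below are invariant
   under such permutations. *)
Notation kpts X k := {ffun 'I_k -> X}.

Definition is_metric (R : realFieldType) (X : finType) (d : X -> X -> R) :=
  [/\ forall x y, 0 <= d x y,
      forall x y, d x y = 0 <-> x = y,
      forall x y, d x y = d y x &
      forall x y z, d x z <= d x y + d y z].

Definition is_distr (R : realFieldType) (X : finType) (P : X -> R) :=
  (forall x, 0 <= P x) /\ \sum_(x : X) P x = 1.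

Definition match_cost (R : realFieldType) (X : finType) (d : X -> X -> R)
  (k : nat) (U V : kpts X k) (s : 'S_k) : R :=
  \sum_(i < k) d (U i) (V (s i)).

(* The seed value is the cost of the identity matching,
   which is itself one of the candidates, so this is exactly the minimum. *)
Definition dk (R : realFieldType) (X : finType) (d : X -> X -> R)
  (k : nat) (U V : kpts X k) : R :=
  \big[Order.min/match_cost d U V 1%g]_(s : 'S_k) match_cost d U V s.

Definition Ek (R : realFieldType) (X : finType) (P : X -> R) (k : nat)
  (f : kpts X k -> R) : R :=
  \sum_(t : kpts X k) (\prod_(i < k) P (t i)) * f t.

Definition rp_cost (R : realFieldType) (X : finType) (d : X -> X -> R)
  (P : X -> R) (k : nat) (S : kpts X k) : R :=
  Ek P (fun Y => dk d S Y).

(* Averaging the triangle inequality d_k(S, X) <= d_k(S, O) + d_k(O, X) over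
   independent S, X ~ P_k gives twice the cost of O, since d_k is symmetric and
   S and X have the same law.  The bound thus holds for every O, optimal or not. *)
From HB Require Import structures.
From mathcomp Require Import all_boot all_order all_algebra all_fingroup.
Set Implicit Arguments. Unset Strict Implicit. Unset Printing Implicit Defensive.
Import Order.TTheory GRing.Theory Num.Theory.
Local Open Scope ring_scope.

Section MatchingDistance.
Variables (R : realFieldType) (X : finType) (d : X -> X -> R) (k : nat).
Implicit Types (U V W : {ffun 'I_k -> X}) (s : 'S_k).

Lemma dk_le_match_cost U V s : dk d U V <= match_cost d U V s.
Proof. exact: bigmin_le. Qed.

Lemma dk_attained U V : exists s, dk d U V = match_cost d U V s.
Proof.
rewrite /dk; apply: (big_ind (fun x => exists s, x = match_cost d U V s)).
- by exists 1%g.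
- move=> _ _ [s ->] [t ->].
  by case: leP => _; [exists s | exists t].
- by move=> s _; exists s.
Qed.

Hypothesis d_sym : forall x y, d x y = d y x.

Lemma match_cost_invg U V s : match_cost d V U s^-1 = match_cost d U V s.
Proof.
rewrite /match_cost (reindex_inj (@perm_inj _ s)) /=.
by apply: eq_bigr => i _; rewrite permK d_sym.
Qed.

Lemma dk_sym U V : dk d U V = dk d V U.
Proof.
suff dk_le U' V' : dk d U' V' <= dk d V' U' by apply/eqP; rewrite eq_le !dk_le.
have [s ->] := dk_attained V' U'.
by rewrite -match_cost_invg dk_le_match_cost.
Qed.

Hypothesis d_triangle : forall x y z, d x z <= d x y + d y z.

Lemma dk_triangle U W V : dk d U V <= dk d U W + dk d W V.
Proof.
have [s ->] := dk_attained U W; have [t ->] := dk_attained W V.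
apply: le_trans (dk_le_match_cost U V (s * t)%g) _.
rewrite /match_cost [X in _ <= _ + X](reindex_inj (@perm_inj _ s)) /=.
by rewrite -big_split /=; apply: ler_sum => i _; rewrite permM.
Qed.

End MatchingDistance.

Section Expectation.
Variables (R : realFieldType) (X : finType) (P : X -> R) (k : nat).
Hypothesis P_distr : is_distr P.
Implicit Types f g : {ffun 'I_k -> X} -> R.

Lemma prod_distr_ge0 (t : {ffun 'I_k -> X}) : 0 <= \prod_(i < k) P (t i).
Proof. by apply: prodr_ge0 => i _; case: P_distr. Qed.

Lemma sum_prod_distr : \sum_(t : {ffun 'I_k -> X}) \prod_(i < k) P (t i) = 1.
Proof.
rewrite -(bigA_distr_bigA (fun (_ : 'I_k) (x : X) => P x)) /=.
by rewrite big1 // => i _; case: P_distr.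
Qed.

Lemma Ek_cst (c : R) : Ek P (fun _ : {ffun 'I_k -> X} => c) = c.
Proof. by rewrite /Ek -mulr_suml sum_prod_distr mul1r. Qed.

Lemma EkD f g : Ek P (fun t => f t + g t) = Ek P f + Ek P g.
Proof. by rewrite /Ek -big_split; apply: eq_bigr => t _; rewrite mulrDr. Qed.

Lemma ler_Ek f g : (forall t, f t <= g t) -> Ek P f <= Ek P g.
Proof. by move=> le_fg; apply: ler_sum => t _; rewrite ler_wpM2l ?prod_distr_ge0. Qed.

End Expectation.

Lemma Ek_rp_cost_le (R : realFieldType) (X : finType) (d : X -> X -> R)
  (P : X -> R) (k : nat) (O : {ffun 'I_k -> X}) :
  is_metric d -> is_distr P ->
  Ek P (fun S : {ffun 'I_k -> X} => rp_cost d P S) <= 2 * rp_cost d P O.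
Proof.
case=> _ _ d_sym d_triangle P_distr.
have rp_cost_le S : rp_cost d P S <= dk d O S + rp_cost d P O.
  rewrite /rp_cost -(Ek_cst k P_distr (dk d O S)) -EkD //.
  by apply: ler_Ek => // Y; rewrite (dk_sym d_sym O S) dk_triangle.
apply: le_trans (ler_Ek P_distr rp_cost_le) _.
by rewrite EkD // Ek_cst // mulr2n mulrDl mul1r.
Qed.

Theorem theorem1 (R : realFieldType) (X : finType) (d : X -> X -> R)
  (P : X -> R) (k : nat) (O : {ffun 'I_k -> X}) :
  is_metric d -> is_distr P -> (0 < k)%N ->
  (forall U : {ffun 'I_k -> X}, rp_cost d P O <= rp_cost d P U) ->
  Ek P (fun S : {ffun 'I_k -> X} => rp_cost d P S) <= 2 * rp_cost d P O.
Proof. by move=> d_metric P_distr _ _; exact: Ek_rp_cost_le. Qed.
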